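(* Let $C$ be a countable torsion abelian group and $A$ a countable abelian group. For a prime $p$ let $A_p\subseteq A$ and $C_p\subseteq C$ be the $p$-primary subgroups. Then $\mathrm{PExt}(C,A)$ and $\prod_{p\text{ prime}}\mathrm{PExt}(C_p,A_p)$ are Borel-definably isomorphic.
   Context: For countable $C,A$: $\mathsf Z(C,A)$ is the Polish group (closed in $A^{C\times C}$) of normalized symmetric 2-cocycles ($c(x,0)=0$, $c(x,y)=c(y,x)$, $c(y,z)-c(x+y,z)+c(x,y+z)-c(x,y)=0$), $\mathsf B(C,A)$ the subgroup of coboundaries $c(x,y)=\phi(y)-\phi(x+y)+\phi(x)$, $\mathsf B_{\mathrm w}(C,A)$ the subgroup of cocycles whose restriction to $S\times S$ is a coboundary for every finite $S\le C$; $\mathrm{PExt}(C,A)=\mathsf B_{\mathrm w}(C,A)/\mathsf B(C,A)$, a group with a Polish cover. The product of groups with a Polish cover $\hat G_p/N_p$ is $\prod_p\hat G_p/\prod_pN_p$. A homomorphism between groups with a Polish cover $\hat G/N\to\hat H/M$ is Borel-definable if it is induced by a Borel function $\hat G\to\hat H$; a Borel-definable isomorphism is a bijective Borel-definable homomorphism. *)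

From HB Require Import structures.
From mathcomp Require Import all_boot all_order all_algebra.
From mathcomp Require Import boolp classical_sets measure.

Set Implicit Arguments.
Unset Strict Implicit.
Unset Printing Implicit Defensive.

Import GRing.Theory.
Local Open Scope ring_scope.
Local Open Scope classical_set_scope.

Definition torsion (C : zmodType) : Prop :=
  forall x : C, exists n : nat, (0 < n)%N /\ x *+ n = 0.

Definition primary (C : zmodType) (p : nat) : {pred C} :=
  fun x => `[< exists n : nat, x *+ (p ^ n) = 0 >].

Lemma primary_zmod_closed (C : zmodType) (p : nat) :
  zmod_closed (@primary C p).
Proof.
split.
  by rewrite /primary unfold_in; apply/asboolP; exists 0%N; rewrite mul0rn.
move=> x y; rewrite !unfold_in => /asboolP [n Hn] /asboolP [m Hm].
apply/asboolP; exists (n + m)%N.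
rewrite mulrnBl expnD mulrnA Hn mul0rn mulnC mulrnA Hm mul0rn.
by rewrite subr0.
Qed.

HB.instance Definition _ (C : zmodType) (p : nat) :=
  GRing.isZmodClosed.Build C (@primary C p) (primary_zmod_closed C p).

Definition pcomp (C : zmodType) (p : nat) := {x : C | x \in @primary C p}.
HB.instance Definition _ (C : zmodType) (p : nat) := [isSub of pcomp C p for @proj1_sig C _].
HB.instance Definition _ (C : zmodType) (p : nat) := [Choice of pcomp C p by <:].
HB.instance Definition _ (C : zmodType) (p : nat) :=
  [SubChoice_isSubZmodule of pcomp C p by <:].

Definition prime_idx := {p : nat | prime p}.

Definition cocycle (C A : zmodType) (c : C -> C -> A) : Prop :=
  [/\ forall x, c x 0 = 0,
      forall x y, c x y = c y x &
      forall x y z, c y z - c (x + y) z + c x (y + z) - c x y = 0].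

Definition Zc (C A : zmodType) : set (C -> C -> A) := [set c | cocycle c].

Definition Bc (C A : zmodType) : set (C -> C -> A) :=
  [set c | cocycle c /\
     exists phi : C -> A, forall x y, c x y = phi y - phi (x + y) + phi x].

(* finite subgroups of C, given by a finite list of their elements *)
Definition fin_subgroup (C : zmodType) (s : seq C) : Prop :=
  0 \in s /\ forall x y, x \in s -> y \in s -> x - y \in s.

Definition Bw (C A : zmodType) : set (C -> C -> A) :=
  [set c | cocycle c /\
     forall s : seq C, fin_subgroup s ->
       exists phi : C -> A, forall x y, x \in s -> y \in s ->
         c x y = phi y - phi (x + y) + phi x].

(* A^(C x C) carries the product of the discrete
   topologies; for countable C, A its Borel sigma-algebra is generated by
   the (clopen) cylinders {c | c x y = a}.  Same for the product space. *)

Definition cyl (C A : Type) : set (set (C -> C -> A)) :=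
  [set B | exists x y a, B = [set c | c x y = a]].

Definition borel1 (C A : Type) : set (set (C -> C -> A)) := <<s @cyl C A >>.

Definition prodspace (C A : zmodType) :=
  forall q : prime_idx, pcomp C (val q) -> pcomp C (val q) -> pcomp A (val q).

Definition cylP (C A : zmodType) : set (set (prodspace C A)) :=
  [set B | exists (q : prime_idx) (x y : pcomp C (val q)) (a : pcomp A (val q)),
             B = [set F | F q x y = a]].

Definition borelP (C A : zmodType) : set (set (prodspace C A)) := <<s @cylP C A >>.

Definition addP (C A : zmodType) (F G : prodspace C A) : prodspace C A :=
  fun q x y => F q x y + G q x y.
Definition subP (C A : zmodType) (F G : prodspace C A) : prodspace C A :=
  fun q x y => F q x y - G q x y.

(* product of the groups with a Polish cover PExt(C_p,A_p) = Bw/B :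
   prod_p Bw(C_p,A_p) / prod_p B(C_p,A_p) *)
Definition prodBw (C A : zmodType) : set (prodspace C A) :=
  [set F | forall q, Bw (F q)].
Definition prodBc (C A : zmodType) : set (prodspace C A) :=
  [set F | forall q, Bc (F q)].

(* Borel-definable isomorphism Ghat/N -> Hhat/M between groups with a
   Polish cover: a bijective group homomorphism induced by a Borel
   function f : Ghat -> Hhat (Borel w.r.t. the subspace sigma-algebras).
   The quotient map is written out: [x] |-> [f x]. *)
Definition borel_def_iso (X Y : Type)
    (addX subX : X -> X -> X) (addY subY : Y -> Y -> Y)
    (BX : set (set X)) (BY : set (set Y))
    (Ghat N : set X) (Hhat M : set Y) : Prop :=
  exists f : X -> Y,
    [/\
        forall x, Ghat x -> Hhat (f x),
        forall B, BY B -> exists B', BX B' /\ Ghat `&` (f @^-1` B) = Ghat `&` B',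
        forall x y, Ghat x -> Ghat y -> N (subX x y) -> M (subY (f x) (f y)),
        forall x y, Ghat x -> Ghat y ->
          M (subY (f (addX x y)) (addY (f x) (f y))) &
        (forall x y, Ghat x -> Ghat y -> M (subY (f x) (f y)) -> N (subX x y)) /\
        (forall z, Hhat z -> exists2 x, Ghat x & M (subY z (f x)))].

Definition add1 (C A : zmodType) (c d : C -> C -> A) : C -> C -> A :=
  fun x y => c x y + d x y.
Definition sub1 (C A : zmodType) (c d : C -> C -> A) : C -> C -> A :=
  fun x y => c x y - d x y.

(* A torsion group C is the direct sum of its primary components C_p, and a
   cocycle on C is a coboundary as soon as its restrictions to all C_p x C_p
   are: sections of the extension A x_e C over the C_p add up to a section over
   C.  A weak coboundary c is sent to the family indexed by p of its
   restrictions to C_p, each corrected by the coboundary of a function psi_p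
   obtained by dividing the sums sum_(i < n) c(iz, z) along cyclic subgroups:
   on a finite p-subgroup c is the coboundary of some phi, and phi + psi_p is
   killed by a power of p, so the corrected cocycle takes values in A_p.
   The inverse map sends (F_p)_p to (x, y) |-> sum_p F_p(x_p, y_p).  Each
   coordinate of the image depends on finitely many coordinates of c, which
   gives Borel definability. *)

From Pilot Require Import Defs.
From HB Require Import structures.
From mathcomp Require Import all_boot all_algebra.
From mathcomp Require Import boolp classical_sets measure zify.

Set Implicit Arguments.
Unset Strict Implicit.
Unset Printing Implicit Defensive.

Import GRing.Theory.
Local Open Scope ring_scope.
Local Open Scope classical_set_scope.

Ltac cancel_opposite a :=
  repeat first [ rewrite addrK | rewrite subrK | rewrite addNr | rewrite subrr
               | rewrite [_ + _ - a]addrAC | rewrite [_ + _ + a]addrAC ].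

(* Proves an abelian-group identity by cancelling each summand against its
   opposite. *)
Ltac cancel_summands :=
  apply/eqP; rewrite -subr_eq0; apply/eqP;
  rewrite ?opprD ?opprK ?addrA ?subr0;
  repeat match goal with
  | |- context [- ?a] => progress cancel_opposite a; rewrite ?add0r ?addr0
  end; done.

Section Cocycles.
Variables C A : zmodType.
Implicit Types (c d : C -> C -> A) (phi chi : C -> A).

Definition coboundary phi : C -> C -> A := fun x y => phi y - phi (x + y) + phi x.

Lemma cocycle_sym c : cocycle c -> forall x y, c x y = c y x.
Proof. by case. Qed.

Lemma cocycle_x0 c : cocycle c -> forall x, c x 0 = 0.
Proof. by case. Qed.

Lemma cocycle_0x c : cocycle c -> forall x, c 0 x = 0.
Proof. by case=> c0 cC _ x; rewrite cC c0. Qed.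

Lemma cocycleA c : cocycle c -> forall x y z, c y z + c x (y + z) = c x y + c (x + y) z.
Proof.
case=> _ _ cA x y z; move/eqP: (cA x y z); rewrite subr_eq0 => /eqP <-.
by rewrite addrAC subrK.
Qed.

Lemma coboundary00 phi : coboundary phi 0 0 = phi 0.
Proof. by rewrite /coboundary addr0 subrr add0r. Qed.

Lemma coboundaryD phi chi x y :
  coboundary (fun z => phi z + chi z) x y = coboundary phi x y + coboundary chi x y.
Proof. by rewrite /coboundary; cancel_summands. Qed.

Lemma coboundaryN phi x y : coboundary (fun z => - phi z) x y = - coboundary phi x y.
Proof. by rewrite /coboundary !opprD opprK. Qed.

Lemma coboundaryB phi chi x y :
  coboundary (fun z => phi z - chi z) x y = coboundary phi x y - coboundary chi x y.
Proof. by rewrite coboundaryD coboundaryN. Qed.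

Lemma coboundary_sum (I : Type) (r : seq I) (phi : I -> C -> A) x y :
  coboundary (fun z => \sum_(i <- r) phi i z) x y = \sum_(i <- r) coboundary (phi i) x y.
Proof. by rewrite /coboundary -!sumrB -big_split. Qed.

Lemma cocycle_coboundary phi : phi 0 = 0 -> cocycle (coboundary phi).
Proof.
move=> phi0; split=> [x | x y | x y z]; rewrite /coboundary.
- by rewrite addr0 phi0 sub0r addNr.
- by rewrite [y + x]addrC; cancel_summands.
- by rewrite [x + (y + z)]addrA; cancel_summands.
Qed.

Lemma cocycleD c d : cocycle c -> cocycle d -> cocycle (add1 c d).
Proof.
move=> [c0 cC cA] [d0 dC dA]; split=> [x | x y | x y z]; rewrite /add1.
- by rewrite c0 d0 addr0.
- by rewrite cC dC.
- by rewrite -[RHS](addr0 0) -{1}(cA x y z) -(dA x y z); cancel_summands.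
Qed.

Lemma cocycleN c : cocycle c -> cocycle (fun x y => - c x y).
Proof.
move=> [c0 cC cA]; split=> [x | x y | x y z].
- by rewrite c0 oppr0.
- by rewrite cC.
- by rewrite -oppr0 -(cA x y z); cancel_summands.
Qed.

Lemma cocycleB c d : cocycle c -> cocycle d -> cocycle (sub1 c d).
Proof. by move=> cc dc; apply: cocycleD => //; apply: cocycleN. Qed.

Lemma cocycle_sum (I : Type) (r : seq I) (c : I -> C -> C -> A) :
  (forall i, cocycle (c i)) -> cocycle (fun x y => \sum_(i <- r) c i x y).
Proof.
move=> cc; elim: r => [|i r IHr].
  have -> : (fun x y : C => \sum_(i <- [::]) c i x y) = coboundary (fun=> 0).
    by do 2![apply: funext => ?]; rewrite big_nil /coboundary subrr add0r.
  exact: cocycle_coboundary.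
have -> : (fun x y => \sum_(j <- i :: r) c j x y) = add1 (c i) (fun x y => \sum_(j <- r) c j x y).
  by do 2![apply: funext => ?]; rewrite big_cons.
exact: cocycleD.
Qed.

Lemma BwD c d : Bw c -> Bw d -> Bw (add1 c d).
Proof.
move=> [cc cw] [dc dw]; split=> [|s s_sub]; first exact: cocycleD.
have [phi cE] := cw s s_sub; have [chi dE] := dw s s_sub.
exists (fun z => phi z + chi z) => x y xs ys.
by rewrite /add1 cE // dE //; symmetry; apply: coboundaryD.
Qed.

End Cocycles.

(* The extension [A x_e C]; the proof [he] is an index so that the group
   structure can rely on the cocycle identities. *)
Definition ext (C A : zmodType) (e : C -> C -> A) (he : cocycle e) := (A * C)%type.
HB.instance Definition _ (C A : zmodType) (e : C -> C -> A) (he : cocycle e) :=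
  Choice.on (ext he).

Section Extension.
Variables (C A : zmodType) (e : C -> C -> A) (he : cocycle e).

Definition ext_add (u v : ext he) : ext he := (u.1 + v.1 + e u.2 v.2, u.2 + v.2).
Definition ext_opp (u : ext he) : ext he := (- u.1 - e u.2 (- u.2), - u.2).
Definition ext_zero : ext he := (0, 0).

Lemma ext_addA : associative ext_add.
Proof.
move=> [a u] [b v] [c w]; rewrite /ext_add /=; congr (_, _); last exact: addrA.
by rewrite -!addrA (cocycleA he); cancel_summands.
Qed.

Lemma ext_addC : commutative ext_add.
Proof. by move=> [a u] [b v]; rewrite /ext_add /= (cocycle_sym he u) [a + b]addrC [u + v]addrC. Qed.

Lemma ext_add0 : left_id ext_zero ext_add.
Proof. by move=> [a u]; rewrite /ext_add /= (cocycle_0x he) !add0r addr0. Qed.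

Lemma ext_addN : left_inverse ext_zero ext_opp ext_add.
Proof.
by move=> [a u]; rewrite /ext_add /= (cocycle_sym he (- u)) addrAC subrK !addNr.
Qed.

HB.instance Definition _ := GRing.isZmodule.Build (ext he) ext_addA ext_addC ext_add0 ext_addN.

Lemma ext_addE (u v : ext he) : u + v = (u.1 + v.1 + e u.2 v.2, u.2 + v.2).
Proof. by []. Qed.

Lemma ext_snd_sum (I : Type) (r : seq I) (F : I -> ext he) :
  (\sum_(i <- r) F i).2 = \sum_(i <- r) (F i).2.
Proof. exact: (big_morph snd). Qed.

Lemma ext_section_coboundary (s : C -> ext he) :
  {morph s : x y / x + y} -> (forall x, (s x).2 = x) ->
  forall x y, e x y = coboundary (fun z => - (s z).1) x y.
Proof.
move=> sD s2 x y; rewrite /coboundary sD ext_addE /= !s2.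
by cancel_summands.
Qed.

End Extension.

Section PrimaryDecomposition.
Variable C : zmodType.
Implicit Types (x y : C) (p : nat).

Lemma primaryP p x : reflect (exists k, x *+ (p ^ k) = 0) (x \in primary p).
Proof. by rewrite unfold_in; apply: asboolP. Qed.

Lemma mulrn_gcd_eq0 x m n :
  (0 < m)%N -> x *+ m = 0 -> x *+ n = 0 -> x *+ gcdn m n = 0.
Proof.
move=> m_gt0 xm xn; have [u v def_g _] := egcdnP n m_gt0.
have : x *+ (u * m) = x *+ (v * n + gcdn m n) by rewrite def_g.
by rewrite mulrnDr [(u * m)%N]mulnC [(v * n)%N]mulnC !mulrnA xm xn !mul0rn add0r => <-.
Qed.

Definition coprime_elt p x := exists2 m, coprime m p & x *+ m = 0.

Lemma coprime_elt0 p : coprime_elt p 0.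
Proof. by exists 1%N; rewrite ?coprime1n ?mulr1n. Qed.

Lemma coprime_eltD p x y : coprime_elt p x -> coprime_elt p y -> coprime_elt p (x + y).
Proof.
move=> [m cm xm] [n cn yn]; exists (m * n)%N; first by rewrite coprimeMl cm.
by rewrite mulrnDl mulrnA xm mul0rn mulnC mulrnA yn mul0rn addr0.
Qed.

Lemma coprime_eltN p x : coprime_elt p x -> coprime_elt p (- x).
Proof. by move=> [m cm xm]; exists m => //; rewrite mulNrn xm oppr0. Qed.

Lemma coprime_eltB p x y : coprime_elt p x -> coprime_elt p y -> coprime_elt p (x - y).
Proof. by move=> cx cy; apply: coprime_eltD => //; apply: coprime_eltN. Qed.

Lemma coprime_elt_sum p (I : Type) (r : seq I) (P : pred I) (F : I -> C) :
  (forall i, P i -> coprime_elt p (F i)) -> coprime_elt p (\sum_(i <- r | P i) F i).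
Proof. by apply: big_ind; [apply: coprime_elt0 | apply: coprime_eltD]. Qed.

Lemma primary_coprime_elt p r x :
  prime p -> prime r -> p != r -> x \in primary r -> coprime_elt p x.
Proof.
move=> p_pr r_pr neq_pr /primaryP [k xk]; exists (r ^ k)%N => //.
by rewrite coprimeXl // prime_coprime // dvdn_prime2 // eq_sym.
Qed.

Lemma primary_coprime_elt_eq0 p x :
  prime p -> x \in primary p -> coprime_elt p x -> x = 0.
Proof.
move=> p_pr /primaryP [k xk] [m cm xm].
have pk_gt0 : (0 < p ^ k)%N by rewrite expn_gt0 prime_gt0.
have := mulrn_gcd_eq0 pk_gt0 xk xm.
by rewrite (eqP (_ : coprime (p ^ k) m)) // coprime_sym coprimeXr.
Qed.

(* The least period of [x] has no prime divisor. *)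
Lemma coprime_elts_eq0 x n :
  (0 < n)%N -> x *+ n = 0 -> (forall p, prime p -> coprime_elt p x) -> x = 0.
Proof.
move=> n_gt0 xn coprime_x.
have ex_period : exists d, (0 < d)%N && (x *+ d == 0) by exists n; rewrite n_gt0 xn eqxx.
case: (ex_minnP ex_period) => d /andP [d_gt0 /eqP xd] d_min.
have [d_gt1 | ] := ltnP 1 d; last by case: d {d_min} d_gt0 xd => [|[]] // _; rewrite mulr1n.
have [m cm xm] := coprime_x _ (pdiv_prime d_gt1).
have g_gt0 : (0 < gcdn d m)%N by rewrite gcdn_gt0 d_gt0.
have /d_min le_dg : (0 < gcdn d m)%N && (x *+ gcdn d m == 0).
  by rewrite g_gt0 (mulrn_gcd_eq0 d_gt0 xd xm) eqxx.
have g_eq : gcdn d m = d.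
  by apply/eqP; rewrite eqn_leq le_dg andbT dvdn_leq // dvdn_gcdl.
have dm : (d %| m)%N by rewrite -g_eq dvdn_gcdr.
by move: cm; rewrite coprime_sym prime_coprime ?pdiv_prime // (dvdn_trans (pdiv_dvd d) dm).
Qed.

(* With [n = m * p ^ k] and [u * m = v * p ^ k + 1], the summand [x *+ (u * m)]
   is killed by [p ^ k] and the rest by [m]. *)
Lemma primary_split p x n : prime p -> (0 < n)%N -> x *+ n = 0 ->
  exists2 y, y \in primary p & coprime_elt p (x - y).
Proof.
move=> p_pr n_gt0 xn; have [m cmp def_n] := pfactor_coprime p_pr n_gt0.
set k := logn p n in def_n; have m_gt0 : (0 < m)%N.
  by move: n_gt0; rewrite def_n muln_gt0 => /andP [].
have [u v def_um _] := egcdnP (p ^ k) m_gt0.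
move: def_um; rewrite (eqP (_ : coprime m (p ^ k))) ?coprimeXr 1?coprime_sym // => def_um.
exists (x *+ (u * m)).
  by apply/primaryP; exists k; rewrite -mulrnA -mulnA -def_n mulnC mulrnA xn mul0rn.
exists m; first by rewrite coprime_sym.
rewrite mulrnBl -mulrnA (_ : u * m * m = v * n + m)%N; last first.
  by rewrite def_um mulnDl mul1n -mulnA [(p ^ k * m)%N]mulnC -def_n.
by rewrite mulrnDr [(v * n)%N]mulnC mulrnA xn mul0rn add0r subrr.
Qed.

End PrimaryDecomposition.

Definition primes_below (n : nat) : seq prime_idx := pmap insub (iota 0 n).

Lemma mem_primes_below n (q : prime_idx) : (q \in primes_below n) = (val q < n)%N.
Proof. by rewrite mem_pmap_sub mem_iota. Qed.

Lemma uniq_primes_below n : uniq (primes_below n).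
Proof. exact/pmap_sub_uniq/iota_uniq. Qed.

Lemma sum_primes_below_stable (V : zmodType) (F : prime_idx -> V) m n :
  (m <= n)%N -> (forall q, (m <= val q)%N -> F q = 0) ->
  \sum_(q <- primes_below n) F q = \sum_(q <- primes_below m) F q.
Proof.
move=> le_mn F0; rewrite /primes_below -(subnKC le_mn) iotaD pmap_cat big_cat /=.
rewrite [X in _ + X]big1_seq ?addr0 // => q /andP [_]; rewrite mem_pmap_sub mem_iota.
by case/andP => + _; apply: F0.
Qed.

Section TorsionGroups.
Variables (C : zmodType) (HC : torsion C).
Implicit Types (x y : C) (p : nat).

Definition period x : nat := xget 1%N [set n | (0 < n)%N /\ x *+ n = 0].

Lemma periodP x : (0 < period x)%N /\ x *+ period x = 0.
Proof.
have [n n_period] := HC x.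
by have := xgetPex 1%N (ex_intro [set n | (0 < n)%N /\ x *+ n = 0] n n_period).
Qed.

(* Junk unless [p] is prime. *)
Definition ppart p x : C := xget 0 [set y | y \in primary p /\ coprime_elt p (x - y)].

Lemma ppartP p x : prime p -> ppart p x \in primary p /\ coprime_elt p (x - ppart p x).
Proof.
move=> p_pr; have [n_gt0 xn] := periodP x.
have [y y_p x_y] := primary_split p_pr n_gt0 xn.
by have := xgetPex 0 (ex_intro [set y | y \in primary p /\ coprime_elt p (x - y)] y (conj y_p x_y)).
Qed.

Lemma ppart_primary p x : prime p -> ppart p x \in primary p.
Proof. by move=> p_pr; have [] := ppartP x p_pr. Qed.

Lemma ppart_eq p x y : prime p -> y \in primary p -> coprime_elt p (x - y) -> ppart p x = y.
Proof.
move=> p_pr y_p x_y; have [xp_p x_xp] := ppartP x p_pr.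
apply/eqP; rewrite -subr_eq0; apply/eqP; apply: (primary_coprime_elt_eq0 p_pr).
  by rewrite rpredB.
have -> : ppart p x - y = (x - y) - (x - ppart p x) by rewrite opprB [RHS]addrC subrKA.
exact: coprime_eltB.
Qed.

Lemma ppartD p : prime p -> {morph ppart p : x y / x + y}.
Proof.
move=> p_pr x y; have [xp_p x_xp] := ppartP x p_pr; have [yp_p y_yp] := ppartP y p_pr.
apply: ppart_eq => //; first by rewrite rpredD.
by rewrite opprD addrACA; apply: coprime_eltD.
Qed.

Lemma ppart0 p : prime p -> ppart p 0 = 0.
Proof. by move=> p_pr; apply: ppart_eq; rewrite ?rpred0 ?subrr //; apply: coprime_elt0. Qed.

Lemma ppartB p : prime p -> {morph ppart p : x y / x - y}.
Proof.
move=> p_pr x y; apply/eqP; rewrite eq_sym subr_eq -ppartD //.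
by rewrite subrK.
Qed.

Lemma ppart_id p x : prime p -> x \in primary p -> ppart p x = x.
Proof. by move=> p_pr x_p; apply: ppart_eq; rewrite ?subrr //; apply: coprime_elt0. Qed.

Lemma ppart_coprime p x : prime p -> coprime_elt p x -> ppart p x = 0.
Proof. by move=> p_pr x_p; apply: ppart_eq; rewrite ?rpred0 ?subr0. Qed.

Lemma ppart_other p r x : prime p -> prime r -> p != r -> x \in primary r -> ppart p x = 0.
Proof. by move=> p_pr r_pr neq_pr x_r; apply/ppart_coprime/(primary_coprime_elt p_pr r_pr). Qed.

Lemma ppart_large p x : prime p -> (period x < p)%N -> ppart p x = 0.
Proof.
move=> p_pr lt_xp; have [n_gt0 xn] := periodP x; apply: ppart_coprime => //.
exists (period x) => //; rewrite coprime_sym prime_coprime //.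
by apply: contraL lt_xp => /(dvdn_leq n_gt0); rewrite leqNgt.
Qed.

Lemma ppart_decomp x n : (period x < n)%N -> x = \sum_(q <- primes_below n) ppart (val q) x.
Proof.
move=> lt_xn; apply/eqP; rewrite -subr_eq0; apply/eqP.
have [y_gt0 y_period] := periodP (x - \sum_(q <- primes_below n) ppart (val q) x).
apply: (coprime_elts_eq0 y_gt0 y_period) => p p_pr.
have x_xp := (ppartP x p_pr).2.
have other (r : prime_idx) : p != val r -> coprime_elt p (ppart (val r) x).
  by move=> neq_pr; apply: (primary_coprime_elt p_pr (valP r) neq_pr); apply/ppart_primary/valP.
have [lt_pn | le_np] := ltnP p n.
  pose q : prime_idx := exist _ p p_pr.
  rewrite (bigD1_seq q) ?mem_primes_below ?uniq_primes_below //= opprD addrA.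
  apply: coprime_eltB => //; apply: coprime_elt_sum => r; rewrite eq_sym => neq_qr.
  by apply: other; rewrite -(inj_eq val_inj) in neq_qr.
rewrite ppart_large ?subr0 ?(leq_trans lt_xn) // in x_xp.
apply: coprime_eltB => //; rewrite big_seq; apply: coprime_elt_sum => r.
rewrite mem_primes_below => lt_rn; apply: other.
by rewrite neq_ltn (leq_trans lt_rn) ?orbT.
Qed.

End TorsionGroups.

Section Gluing.
Variables (C A : zmodType) (HC : torsion C).

(* The local coboundaries give homomorphic sections [C_p -> ext e], which add
   up to a section over [C = (+)_p C_p]. *)
Lemma coboundary_glue (e : C -> C -> A) (chi : prime_idx -> C -> A) : cocycle e ->
  (forall q x y, x \in primary (val q) -> y \in primary (val q) ->
     e x y = coboundary (chi q) x y) ->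
  exists phi, forall x y, e x y = coboundary phi x y.
Proof.
move=> he e_loc.
have chi0 q : chi q 0 = 0 by rewrite -coboundary00 -e_loc ?rpred0 ?(cocycle_x0 he).
pose sq q x : ext he := (- chi q (ppart (val q) x), ppart (val q) x).
pose s x := \sum_(q <- primes_below (period x).+1) sq q x.
have sE x n : (period x < n)%N -> s x = \sum_(q <- primes_below n) sq q x.
  move=> lt_xn; rewrite [RHS](sum_primes_below_stable lt_xn) // => q lt_xq.
  by rewrite /sq ppart_large ?chi0 ?oppr0 //; apply: valP.
exists (fun x => - (s x).1); apply: ext_section_coboundary => [x y | x].
  rewrite !(sE _ (period x + period y + period (x + y)).+1) -?big_split /=; try lia.
  apply: eq_bigr => q _; have q_pr := valP q.
  rewrite /sq ext_addE /= ppartD //; congr (_, _).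
  by rewrite (e_loc q) ?ppart_primary // /coboundary; cancel_summands.
rewrite /s ext_snd_sum [RHS](ppart_decomp HC (ltnSn (period x))).
by apply: eq_bigr.
Qed.

End Gluing.

Section FiniteSubgroups.
Variable C : zmodType.
Implicit Types (s : seq C) (x y : C).

Lemma fin_subgroup0 s : fin_subgroup s -> 0 \in s.
Proof. by case. Qed.

Lemma fin_subgroupB s x y : fin_subgroup s -> x \in s -> y \in s -> x - y \in s.
Proof. by case=> _; apply. Qed.

Lemma fin_subgroupN s x : fin_subgroup s -> x \in s -> - x \in s.
Proof. by move=> s_sub xs; rewrite -sub0r fin_subgroupB ?fin_subgroup0. Qed.

Lemma fin_subgroupD s x y : fin_subgroup s -> x \in s -> y \in s -> x + y \in s.
Proof. by move=> s_sub xs ys; rewrite -[y]opprK fin_subgroupB ?fin_subgroupN. Qed.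

Lemma fin_subgroupMn s x i : fin_subgroup s -> x \in s -> x *+ i \in s.
Proof.
move=> s_sub xs; elim: i => [|i IHi]; first by rewrite mulr0n fin_subgroup0.
by rewrite mulrSr fin_subgroupD.
Qed.

Lemma fin_subgroup_zero : fin_subgroup [:: 0 : C].
Proof. by split=> [|x y]; rewrite ?inE // => /eqP -> /eqP ->; rewrite subrr. Qed.

Lemma fin_subgroup_map (D : zmodType) (f : C -> D) s :
  {morph f : x y / x - y} -> fin_subgroup s -> fin_subgroup (map f s).
Proof.
move=> fB s_sub; split=> [|_ _ /mapP [x xs ->] /mapP [y ys ->]].
  by rewrite -(subrr (f 0)) -fB subrr map_f ?fin_subgroup0.
by rewrite -fB map_f ?fin_subgroupB.
Qed.

Lemma mulrn_modn x m k : x *+ m = 0 -> x *+ k = x *+ (k %% m).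
Proof. by move=> xm; rewrite {1}(divn_eq k m) mulrnDr mulnC mulrnA xm mul0rn add0r. Qed.

Lemma fin_subgroup_adjoin s x m : fin_subgroup s -> (0 < m)%N -> x *+ m = 0 ->
  exists s', [/\ fin_subgroup s', {subset s <= s'}, x \in s' &
    forall w, w \in s' -> exists2 u, u \in s & exists i, w = u + x *+ i].
Proof.
move=> s_sub m_gt0 xm; exists [seq u + x *+ i | u <- s, i <- iota 0 m].
have mem_s' u i : u \in s -> u + x *+ i \in [seq u + x *+ i | u <- s, i <- iota 0 m].
  move=> us; apply/allpairsP; exists (u, i %% m)%N; rewrite /= us mem_iota ltn_pmod //.
  by rewrite -mulrn_modn.
split=> [|u us||].
- split; first by have := mem_s' 0 0%N (fin_subgroup0 s_sub); rewrite mulr0n addr0.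
  move=> _ _ /allpairsP [[u i] [/= us _ ->]] /allpairsP [[v j] [/= vs _ ->]].
  have xNj : - (x *+ j) = x *+ (j * (m - 1)).
    apply/eqP; rewrite eq_sym -subr_eq0 opprK -mulrnDr -mulnSr subn1 prednK //.
    by rewrite mulnC mulrnA xm mul0rn.
  rewrite (_ : _ - _ = (u - v) + x *+ (i + j * (m - 1))) ?mem_s' ?fin_subgroupB //.
  by rewrite mulrnDr -xNj; cancel_summands.
- by have := mem_s' u 0%N us; rewrite mulr0n addr0.
- by have := mem_s' 0 1%N (fin_subgroup0 s_sub); rewrite mulr1n add0r.
by move=> w /allpairsP [[u i] [/= us _ ->]]; exists u => //; exists i.
Qed.

End FiniteSubgroups.

Section Normalization.
Variables C A : zmodType.
Implicit Types (c d : C -> C -> A) (p : nat) (x y z : C).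

Definition plog p z : nat := xget 0%N [set k | z *+ (p ^ k)%N = 0].

Definition pexponent p z : nat := (p ^ plog p z)%N.

Lemma mulrn_pexponent p z : z \in primary p -> z *+ pexponent p z = 0.
Proof.
by move/primaryP=> [k zk]; apply: (xgetPex 0%N (ex_intro [set k | z *+ (p ^ k)%N = 0] k zk)).
Qed.

Lemma pexponent_gt0 p z : prime p -> (0 < pexponent p z)%N.
Proof. by move=> p_pr; rewrite expn_gt0 prime_gt0. Qed.

Lemma primary_killed_by_pexponent p z (a : A) : a *+ pexponent p z = 0 -> a \in primary p.
Proof. by move=> az; apply/primaryP; eexists; apply: az. Qed.

Lemma primary_mulrn_pexponent p z (a : A) : a *+ pexponent p z \in primary p -> a \in primary p.
Proof.
move/primaryP=> [k ak]; apply/primaryP.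
by exists (plog p z + k)%N; rewrite expnD mulrnA.
Qed.

Lemma primary_fin_subgroup2 p x y : prime p -> x \in primary p -> y \in primary p ->
  exists s, [/\ fin_subgroup s, x \in s, y \in s & {subset s <= primary p}].
Proof.
move=> p_pr x_p y_p.
have [s1 [s1_sub _ x_s1 s1E]] := fin_subgroup_adjoin (fin_subgroup_zero C)
  (pexponent_gt0 x p_pr) (mulrn_pexponent x_p).
have [s2 [s2_sub s12 y_s2 s2E]] := fin_subgroup_adjoin s1_sub
  (pexponent_gt0 y p_pr) (mulrn_pexponent y_p).
exists s2; split=> [||//|w /s2E [u /s1E [v] + [i ->] [j ->]]] //; first exact: s12.
by rewrite inE => /eqP ->; rewrite add0r rpredD // rpredMn.
Qed.

Definition cyclic_sum c p z : A := \sum_(0 <= i < pexponent p z) c (z *+ i) z.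

Lemma cyclic_sumD c d p z : cyclic_sum (add1 c d) p z = cyclic_sum c p z + cyclic_sum d p z.
Proof. exact: big_split. Qed.

Lemma cyclic_sumB c d p z : cyclic_sum (sub1 c d) p z = cyclic_sum c p z - cyclic_sum d p z.
Proof. exact: sumrB. Qed.

Lemma sum_coboundary_mulrn (phi : C -> A) z n : phi 0 = 0 -> z *+ n = 0 ->
  \sum_(0 <= i < n) coboundary phi (z *+ i) z = phi z *+ n.
Proof.
move=> phi0 zn.
have step i : coboundary phi (z *+ i) z = phi z - (phi (z *+ i.+1) - phi (z *+ i)).
  by rewrite /coboundary mulrSr; cancel_summands.
rewrite (eq_bigr _ (fun i _ => step i)) sumrB telescope_sumr // sumr_const_nat subn0.
by rewrite zn mulr0n phi0 subrr subr0.
Qed.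

Lemma cyclic_sum_coboundary c p s (phi : C -> A) z : cocycle c -> fin_subgroup s ->
  (forall x y, x \in s -> y \in s -> c x y = coboundary phi x y) ->
  z \in s -> z \in primary p -> cyclic_sum c p z = phi z *+ pexponent p z.
Proof.
move=> cc s_sub c_loc zs z_p.
have phi0 : phi 0 = 0 by rewrite -coboundary00 -c_loc ?fin_subgroup0 ?(cocycle_x0 cc).
rewrite /cyclic_sum -(sum_coboundary_mulrn phi0 (mulrn_pexponent z_p)).
by apply: eq_bigr => i _; rewrite c_loc ?fin_subgroupMn.
Qed.

(* Some [a] with [a *+ pexponent p z = - cyclic_sum c p z]: if [c] is the
   coboundary of [phi] near [z], this is [- phi z] up to a [p]-primary error.
   The value at [0] is fixed so that [coboundary (cyclic_quot c p)] stays
   normalized. *)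
Definition cyclic_quot c p z : A :=
  if z == 0 then 0 else xget 0 [set a | a *+ pexponent p z + cyclic_sum c p z = 0].

Lemma cyclic_quot0 c p : cyclic_quot c p 0 = 0.
Proof. by rewrite /cyclic_quot eqxx. Qed.

Lemma cyclic_quotP c p z : Bw c -> prime p -> z \in primary p ->
  cyclic_quot c p z *+ pexponent p z + cyclic_sum c p z = 0.
Proof.
move=> [cc cw] p_pr z_p; rewrite /cyclic_quot; case: eqP => [-> | _].
  by rewrite mul0rn add0r /cyclic_sum big1 // => i _; rewrite (cocycle_x0 cc).
apply: (xgetPex 0 (P := [set a | a *+ pexponent p z + cyclic_sum c p z = 0])).
have [s [s_sub zs _ _]] := primary_fin_subgroup2 p_pr z_p z_p.
have [phi c_loc] := cw s s_sub; exists (- phi z).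
by rewrite /= (cyclic_sum_coboundary cc s_sub c_loc) // mulNrn addNr.
Qed.

Lemma cyclic_quot_mulrn c p z : Bw c -> prime p -> z \in primary p ->
  cyclic_quot c p z *+ pexponent p z = - cyclic_sum c p z.
Proof. by move=> cB p_pr z_p; apply/eqP; rewrite -addr_eq0 cyclic_quotP. Qed.

Lemma eq_cyclic_quot c d p z :
  (forall i, (i < pexponent p z)%N -> c (z *+ i) z = d (z *+ i) z) ->
  cyclic_quot c p z = cyclic_quot d p z.
Proof.
move=> cd; rewrite /cyclic_quot /cyclic_sum.
by rewrite (eq_big_nat _ _ (F2 := fun i => d (z *+ i) z)).
Qed.

Lemma primary_witnessD_cyclic_quot c p s (phi : C -> A) z : Bw c -> prime p ->
  fin_subgroup s -> {subset s <= primary p} ->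
  (forall x y, x \in s -> y \in s -> c x y = coboundary phi x y) ->
  z \in s -> phi z + cyclic_quot c p z \in primary p.
Proof.
move=> cB p_pr s_sub s_p c_loc zs; apply: (primary_killed_by_pexponent (z := z)).
rewrite mulrnDl -(cyclic_sum_coboundary cB.1 s_sub c_loc zs (s_p z zs)).
by rewrite addrC cyclic_quotP ?s_p.
Qed.

Definition pnormalize c p : C -> C -> A := add1 c (coboundary (cyclic_quot c p)).

Lemma pnormalize_cocycle c p : cocycle c -> cocycle (pnormalize c p).
Proof. by move=> cc; apply/cocycleD/cocycle_coboundary/cyclic_quot0. Qed.

Lemma pnormalize_primary c p x y : Bw c -> prime p ->
  x \in primary p -> y \in primary p -> pnormalize c p x y \in primary p.
Proof.
move=> cB p_pr x_p y_p; have [s [s_sub xs ys s_p]] := primary_fin_subgroup2 p_pr x_p y_p.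
have [phi c_loc] := cB.2 s s_sub.
rewrite /pnormalize /add1 c_loc //.
change (coboundary phi x y + coboundary (cyclic_quot c p) x y \in primary p).
rewrite -coboundaryD; apply: rpredD; first apply: rpredB.
all: by apply: (primary_witnessD_cyclic_quot cB p_pr s_sub s_p c_loc); rewrite ?fin_subgroupD.
Qed.

End Normalization.

Section PrimaryComponents.
Variables C A : zmodType.
Implicit Types (c d : C -> C -> A) (p : nat).

Lemma Bc_pcomp p (h : Defs.pcomp C p -> Defs.pcomp C p -> Defs.pcomp A p) (chi : C -> A) :
  (forall z : Defs.pcomp C p, chi (val z) \in primary p) -> chi 0 = 0 ->
  (forall x y, val (h x y) = coboundary chi (val x) (val y)) -> Bc h.
Proof.
move=> chi_p chi0 hE; pose phi (z : Defs.pcomp C p) : Defs.pcomp A p := insubd 0 (chi (val z)).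
have phiE z : val (phi z) = chi (val z) by rewrite insubdK.
have -> : h = coboundary phi.
  by do 2![apply: funext => ?]; apply: val_inj; rewrite hE /= !phiE.
split; last by exists phi.
by apply: cocycle_coboundary; apply: val_inj; rewrite phiE chi0.
Qed.

Lemma Bw_pcomp p (h : Defs.pcomp C p -> Defs.pcomp C p -> Defs.pcomp A p) (g : C -> C -> A) :
  (forall x y, val (h x y) = g (val x) (val y)) -> cocycle g ->
  (forall s : seq (Defs.pcomp C p), fin_subgroup s -> exists chi : C -> A,
     {in s, forall z, chi (val z) \in primary p} /\
     forall x y, x \in s -> y \in s -> g (val x) (val y) = coboundary chi (val x) (val y)) ->
  Bw h.
Proof.
move=> hE [g0 gC gA] g_loc; split.
  split=> [x | x y | x y z]; apply: val_inj; rewrite /= !hE //.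
  exact: gA.
move=> s s_sub; have [chi [chi_p gE]] := g_loc s s_sub.
exists (fun z => insubd 0 (chi (val z))) => x y xs ys.
apply: val_inj; rewrite hE gE //= !insubdK ?chi_p //.
exact: (chi_p (x + y) (fin_subgroupD s_sub xs ys)).
Qed.

Definition to_prod c : prodspace C A :=
  fun q x y => insubd 0 (pnormalize c (val q) (val x) (val y)).
Arguments to_prod : clear implicits.

Lemma val_to_prod c (q : prime_idx) (x y : Defs.pcomp C (val q)) :
  Bw c -> val (to_prod c q x y) = pnormalize c (val q) (val x) (val y).
Proof. by move=> cB; rewrite insubdK //; apply: pnormalize_primary => //; apply: valP. Qed.

Lemma pnormalizeB c d p x y :
  pnormalize c p x y - pnormalize d p x y =
  sub1 c d x y + coboundary (fun z => cyclic_quot c p z - cyclic_quot d p z) x y.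
Proof. by rewrite coboundaryB /pnormalize /add1 /sub1; cancel_summands. Qed.

Lemma to_prod_Bw c : Bw c -> prodBw (to_prod c).
Proof.
move=> cB q; have q_pr : prime (val q) := valP q.
apply: (Bw_pcomp (g := pnormalize c (val q))) => [x y | | s s_sub].
- exact: val_to_prod.
- exact/pnormalize_cocycle/cB.1.
have S_sub : fin_subgroup (map val s) by apply: fin_subgroup_map s_sub.
have S_p : {subset map val s <= primary (val q)} by move=> _ /mapP [w _ ->]; apply: valP.
have [phi c_loc] := cB.2 _ S_sub.
exists (fun z => phi z + cyclic_quot c (val q) z); split => [z zs | x y xs ys].
  by apply: (primary_witnessD_cyclic_quot cB q_pr S_sub S_p c_loc); apply: map_f.
by rewrite /pnormalize /add1 c_loc ?map_f // coboundaryD.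
Qed.

Lemma to_prodD c d : Bw c -> Bw d ->
  prodBc (subP (to_prod (add1 c d)) (addP (to_prod c) (to_prod d))).
Proof.
move=> cB dB q; have q_pr : prime (val q) := valP q; have cdB := BwD cB dB.
pose chi z :=
  cyclic_quot (add1 c d) (val q) z - (cyclic_quot c (val q) z + cyclic_quot d (val q) z).
apply: (Bc_pcomp (chi := chi)) => [z | | x y].
- have z_p : val z \in primary (val q) := valP z.
  apply: (primary_killed_by_pexponent (z := val z)).
  by rewrite mulrnBl mulrnDl !cyclic_quot_mulrn // cyclic_sumD; cancel_summands.
- by rewrite /chi !cyclic_quot0 addr0 subrr.
rewrite /subP /addP /= !val_to_prod // coboundaryB coboundaryD.
by rewrite /pnormalize /add1; cancel_summands.
Qed.

Lemma to_prod_Bc c d : Bw c -> Bw d -> Bc (sub1 c d) -> prodBc (subP (to_prod c) (to_prod d)).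
Proof.
move=> cB dB [cdc [phi cdE]] q; have q_pr : prime (val q) := valP q.
have phi0 : phi 0 = 0 by rewrite -coboundary00 /coboundary -cdE (cocycle_x0 cdc).
pose chi z := phi z + (cyclic_quot c (val q) z - cyclic_quot d (val q) z).
apply: (Bc_pcomp (chi := chi)) => [z | | x y].
- have z_p : val z \in primary (val q) := valP z.
  apply: (primary_killed_by_pexponent (z := val z)).
  have cs_cd : cyclic_sum c (val q) (val z) - cyclic_sum d (val q) (val z) =
      phi (val z) *+ pexponent (val q) (val z).
    rewrite -cyclic_sumB -(sum_coboundary_mulrn phi0 (mulrn_pexponent z_p)).
    by apply: eq_bigr => i _; apply: cdE.
  by rewrite mulrnDl mulrnBl !cyclic_quot_mulrn // -cs_cd; cancel_summands.
- by rewrite /chi phi0 !cyclic_quot0 subrr addr0.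
rewrite /subP /= !val_to_prod // pnormalizeB /chi (coboundaryD phi).
by congr (_ + _); exact: cdE.
Qed.

End PrimaryComponents.

Section InverseMap.
Variables (C A : zmodType) (HC : torsion C).
Implicit Types (q r : prime_idx) (x y : C) (F : prodspace C A).

Definition pproj q x : Defs.pcomp C (val q) := insubd 0 (ppart (val q) x).

Lemma val_pproj q x : val (pproj q x) = ppart (val q) x.
Proof. by rewrite insubdK //; apply/ppart_primary/valP. Qed.

Lemma pprojD q : {morph pproj q : x y / x + y}.
Proof. by move=> x y; apply: val_inj; rewrite /= !val_pproj ppartD //; apply: valP. Qed.

Lemma pprojB q : {morph pproj q : x y / x - y}.
Proof. by move=> x y; apply: val_inj; rewrite /= !val_pproj ppartB //; apply: valP. Qed.

Lemma pproj0 q : pproj q 0 = 0.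
Proof. by apply: val_inj; rewrite val_pproj ppart0 //; apply: valP. Qed.

Lemma pproj_val q (x : Defs.pcomp C (val q)) : pproj q (val x) = x.
Proof. by apply: val_inj; rewrite val_pproj ppart_id //; apply: valP. Qed.

Lemma pproj_other q r (x : Defs.pcomp C (val r)) : q != r -> pproj q (val x) = 0.
Proof.
move=> neq_qr; apply: val_inj; rewrite val_pproj (ppart_other HC (valP q) (valP r)) //.
exact: valP.
Qed.

Lemma pproj_large q x : (period x < val q)%N -> pproj q x = 0.
Proof. by move=> lt_xq; apply: val_inj; rewrite val_pproj ppart_large //; apply: valP. Qed.

Definition of_prod_upto F n x y : A := \sum_(q <- primes_below n) val (F q (pproj q x) (pproj q y)).

Definition of_prod F x y : A := of_prod_upto F (period x + period y).+1 x y.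

Lemma of_prod_upto_stable F n x y : prodBw F ->
  (period x + period y < n)%N -> of_prod F x y = of_prod_upto F n x y.
Proof.
move=> FB lt_n; rewrite /of_prod /of_prod_upto [RHS](sum_primes_below_stable lt_n) // => q le_q.
have [[F0 FC _] _] := FB q; have lt_xq : (period x < val q)%N by lia.
by rewrite (pproj_large lt_xq) FC F0.
Qed.

Lemma of_prod_upto_cocycle F n : prodBw F -> cocycle (of_prod_upto F n).
Proof.
move=> FB; apply: cocycle_sum => q; have [[F0 FC FA] _] := FB q.
split=> [x | x y | x y z]; first by rewrite pproj0 F0.
  by rewrite FC.
by rewrite !pprojD; have := congr1 val (FA (pproj q x) (pproj q y) (pproj q z)).
Qed.

Lemma of_prod_cocycle F : prodBw F -> cocycle (of_prod F).
Proof.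
move=> FB; have upto_cc n := of_prod_upto_cocycle n FB.
split=> [x | x y | x y z]; first exact: (cocycle_x0 (upto_cc _)).
  by rewrite /of_prod addnC; apply: (cocycle_sym (upto_cc _)).
pose n := (period x + period y + period z + period (x + y) + period (y + z)).+1.
rewrite !(@of_prod_upto_stable _ n) //; try lia.
by case: (upto_cc n).
Qed.

Lemma of_prod_Bw F : prodBw F -> Bw (of_prod F).
Proof.
move=> FB; split=> [|s s_sub]; first exact: of_prod_cocycle.
have loc q : exists chi : C -> A, forall x y, x \in s -> y \in s ->
    val (F q (pproj q x) (pproj q y)) = coboundary chi x y.
  have S_sub := fin_subgroup_map (pprojB q) s_sub.
  have [phi phiE] := (FB q).2 _ S_sub.
  exists (fun z => val (phi (pproj q z))) => x y xs ys.
  by rewrite phiE ?map_f // -pprojD.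
have [chi chiE] := choice loc; pose m := \max_(x <- s) period x.
exists (fun z => \sum_(q <- primes_below (m + m).+1) chi q z) => x y xs ys.
have le_m w : w \in s -> (period w <= m)%N by move=> ws; apply: leq_bigmax_seq.
rewrite (@of_prod_upto_stable _ (m + m).+1) //; last first.
  by have := le_m x xs; have := le_m y ys; lia.
transitivity (coboundary (fun z => \sum_(q <- primes_below (m + m).+1) chi q z) x y) => //.
by rewrite coboundary_sum; apply: eq_bigr => q _; apply: chiE.
Qed.

Lemma of_prod_val F q (x y : Defs.pcomp C (val q)) : prodBw F ->
  of_prod F (val x) (val y) = val (F q x y).
Proof.
move=> FB.
rewrite (@of_prod_upto_stable _ (period (val x) + period (val y) + val q).+1) //; last lia.
rewrite /of_prod_upto (bigD1_seq q) ?mem_primes_below ?uniq_primes_below //=; last lia.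
rewrite !pproj_val big1 ?addr0 // => r neq_rq; have [[F0 FC _] _] := FB r.
by rewrite (pproj_other x neq_rq) FC F0.
Qed.

Lemma to_prod_inj (c d : C -> C -> A) : Bw c -> Bw d ->
  prodBc (subP (to_prod c) (to_prod d)) -> Bc (sub1 c d).
Proof.
move=> cB dB cdB; have cdc := cocycleB cB.1 dB.1.
have loc q : exists chi : C -> A, forall x y, x \in primary (val q) -> y \in primary (val q) ->
    sub1 c d x y = coboundary chi x y.
  have [_ [phi phiE]] := cdB q.
  pose D z := cyclic_quot c (val q) z - cyclic_quot d (val q) z.
  exists (fun z => val (phi (insubd 0 z)) - D z) => x y x_q y_q.
  have XY : insubd 0 x + insubd 0 y = insubd 0 (x + y) :> Defs.pcomp C (val q).
    by apply: val_inj; rewrite /= !insubdK ?rpredD.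
  have := congr1 val (phiE (insubd 0 x) (insubd 0 y)).
  rewrite /subP /= !val_to_prod // !insubdK // pnormalizeB XY => cdE.
  by rewrite coboundaryB -[sub1 c d x y](addrK (coboundary D x y)) cdE.
have [chi chiE] := choice loc; have [phi phiE] := coboundary_glue HC cdc chiE.
by split=> //; exists phi.
Qed.

Lemma to_prod_surj F : prodBw F -> exists2 c, Bw c & prodBc (subP F (to_prod c)).
Proof.
move=> FB; have cB := of_prod_Bw FB; exists (of_prod F) => // q.
have q_pr : prime (val q) := valP q.
apply: (Bc_pcomp (chi := fun z => - cyclic_quot (of_prod F) (val q) z)) => [z | | x y].
- have z_p : val z \in primary (val q) := valP z.
  rewrite rpredN; apply: (primary_mulrn_pexponent (z := val z)).
  rewrite cyclic_quot_mulrn // rpredN; apply: rpred_sum => i _.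
  by rewrite -raddfMn of_prod_val //; apply: valP.
- by rewrite cyclic_quot0 oppr0.
rewrite /subP /= val_to_prod // -of_prod_val // coboundaryN /pnormalize /add1.
by rewrite opprD addNKr.
Qed.

End InverseMap.

Lemma sigma_algebraT_gen (T : Type) (G : set (set T)) : <<s G >> setT.
Proof.
by case/(sigma_algebraP (fun X _ => @subsetT _ X)): (smallest_sigma_algebra setT G).
Qed.

Lemma sigma_algebraI_gen (T : Type) (G : set (set T)) (X Y : set T) :
  <<s G >> X -> <<s G >> Y -> <<s G >> (X `&` Y).
Proof.
case/(sigma_algebraP (fun X _ => @subsetT _ X)): (smallest_sigma_algebra setT G).
by move=> _ _ _; apply.
Qed.

Lemma sigma_algebra_bigcup_countable (T : Type) (G : set (set T)) (I : countType)
    (P : set I) (F : I -> set T) :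
  (forall i, P i -> <<s G >> (F i)) -> <<s G >> (\bigcup_(i in P) F i).
Proof.
move=> FG.
pose Fn n := if unpickle n is Some i then (if `[< P i >] then F i else set0) else set0.
have -> : \bigcup_(i in P) F i = \bigcup_n Fn n.
  apply/seteqP; split=> [t [i Pi Fit] | t [n _]].
    by exists (pickle i) => //; rewrite /Fn pickleK; case: asboolP.
  by rewrite /Fn; case: (unpickle n) => // i; case: asboolP => // Pi Fit; exists i.
apply: sigma_algebra_bigcup => n; rewrite /Fn.
case: (unpickle n) => [i|]; last exact: sigma_algebra0.
by case: asboolP => [/FG //|_]; apply: sigma_algebra0.
Qed.

Definition fin_determined (C : eqType) (A : Type) (Phi : (C -> C -> A) -> A) : Prop :=
  exists L : seq (C * C), forall c d : C -> C -> A,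
    {in L, forall uv, c uv.1 uv.2 = d uv.1 uv.2} -> Phi c = Phi d.

Lemma borel1_pattern (C A : Type) (L : seq (C * C)) (v : seq A) :
  borel1 [set c : C -> C -> A | [seq c uv.1 uv.2 | uv <- L] = v].
Proof.
elim: L v => [|uv L IHL] [|a v] /=.
- have -> : [set c : C -> C -> A | [::] = [::] :> seq A] = setT by apply/seteqP.
  exact: sigma_algebraT_gen.
- have -> : [set c : C -> C -> A | [::] = a :: v] = set0 by apply/seteqP; split=> c //=.
  exact: sigma_algebra0.
- have -> : [set c : C -> C -> A | c uv.1 uv.2 :: [seq c uv.1 uv.2 | uv <- L] = [::]] = set0.
    by apply/seteqP; split=> c //=.
  exact: sigma_algebra0.
have -> : [set c : C -> C -> A | c uv.1 uv.2 :: [seq c uv.1 uv.2 | uv <- L] = a :: v] =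
    [set c | c uv.1 uv.2 = a] `&` [set c | [seq c uv.1 uv.2 | uv <- L] = v].
  by apply/seteqP; split=> c /=; [case=> -> -> | case=> -> ->].
apply: sigma_algebraI_gen (IHL v); apply: sub_sigma_algebra.
by exists uv.1, uv.2, a.
Qed.

Lemma borel1_fin_determined (C : eqType) (A : countType) (Phi : (C -> C -> A) -> A) (a : A) :
  fin_determined Phi -> borel1 [set c | Phi c = a].
Proof.
move=> [L PhiL]; pose pat (c : C -> C -> A) := [seq c uv.1 uv.2 | uv <- L].
have -> : [set c | Phi c = a] = \bigcup_(v in pat @` [set c | Phi c = a]) [set c | pat c = v].
  apply/seteqP; split=> [c Phic | c [_ [c0 Phic0 <-] /= pat_c]].
    by exists (pat c) => //; exists c.
  by rewrite /= -Phic0; apply: PhiL => uv uvL; move/eq_in_map: pat_c => /(_ uv uvL).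
by apply: sigma_algebra_bigcup_countable => v _; apply: borel1_pattern.
Qed.

Lemma fin_determined_pnormalize (C A : zmodType) p (x y : C) :
  fin_determined (fun c : C -> C -> A => pnormalize c p x y).
Proof.
exists ((x, y) :: [seq (w *+ i, w) | w <- [:: y; x + y; x], i <- iota 0 (pexponent p w)]).
move=> c d cd; have cdxy := cd (x, y) (mem_head _ _).
have cqE w : w \in [:: y; x + y; x] -> cyclic_quot c p w = cyclic_quot d p w.
  move=> ws; apply: eq_cyclic_quot => i lt_i; apply: (cd (w *+ i, w)).
  by rewrite inE; apply/orP; right; apply/allpairsPdep; exists w, i; rewrite mem_iota.
by rewrite /pnormalize /add1 /coboundary cdxy !cqE // !inE eqxx ?orbT.
Qed.

(* The [B] whose preimage is traced on [D] by a set of [<<s GT >>] form a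
   sigma-algebra. *)
Lemma trace_preimage_gen (T U : Type) (GT : set (set T)) (GU : set (set U))
    (D : set T) (f : T -> U) :
  (forall B, GU B -> exists B', <<s GT >> B' /\ D `&` f @^-1` B = D `&` B') ->
  forall B, <<s GU >> B -> exists B', <<s GT >> B' /\ D `&` f @^-1` B = D `&` B'.
Proof.
move=> f_gen; pose good B := exists B', <<s GT >> B' /\ D `&` f @^-1` B = D `&` B'.
have goodE B B' : D `&` f @^-1` B = D `&` B' -> forall t, D t -> B (f t) <-> B' t.
  move=> E t Dt; split=> Bt.
    by have [] : (D `&` B') t by rewrite -E.
  by have [] : (D `&` f @^-1` B) t by rewrite E.
suff : <<s GU >> `<=` good by apply.
apply: smallest_sub => //; split.
- exists set0; split; first exact: sigma_algebra0.
  by apply/seteqP; split=> t [].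
- move=> B [B' [GB' E]]; exists (setT `\` B'); split; first exact: sigma_algebraCD.
  apply/seteqP; split=> t [Dt [_ nBt]]; split=> //; split=> // Bt; apply: nBt.
    exact/(goodE _ _ E).
  exact/(goodE _ _ E).
- move=> Bn goodBn; have [Bn' Bn'E] := choice goodBn.
  exists (\bigcup_n Bn' n); split; first by apply: sigma_algebra_bigcup => n; case: (Bn'E n).
  apply/seteqP; split=> t [Dt [n _ Bnt]]; split=> //; exists n => //.
    exact/(goodE _ _ (Bn'E n).2).
  exact/(goodE _ _ (Bn'E n).2).
Qed.

Lemma to_prod_borel (C A : countZmodType) (B : set (prodspace C A)) : borelP B ->
  exists B', borel1 B' /\ @Bw C A `&` @to_prod C A @^-1` B = @Bw C A `&` B'.
Proof.
apply: trace_preimage_gen => _ [q [x [y [a ->]]]].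
exists [set c | pnormalize c (val q) (val x) (val y) = val a]; split.
  exact: (borel1_fin_determined _ (fin_determined_pnormalize _ _ _ _)).
apply/seteqP; split=> c [cB /= E]; split=> //=.
  by rewrite -val_to_prod // E.
by apply: val_inj; rewrite val_to_prod.
Qed.

Unset Implicit Arguments.

Theorem lemma4p6 (C A : countZmodType) (HC : torsion C) :
  borel_def_iso (@add1 C A) (@sub1 C A) (@addP C A) (@subP C A)
    (@borel1 C A) (@borelP C A)
    (@Bw C A) (@Bc C A) (@prodBw C A) (@prodBc C A).
Proof.
exists (@to_prod C A); split.
- by move=> c; apply: to_prod_Bw.
- exact: to_prod_borel.
- by move=> c d cB dB /(to_prod_Bc cB dB).
- by move=> c d cB dB; apply: to_prodD.
split=> [c d cB dB | F FB]; first exact: (to_prod_inj HC).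
exact: (to_prod_surj HC).
Qed.
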